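(* Let $c_{\mathrm{rew}},c_{\mathrm{ver}}>0$, $c_{\min}=\min\{c_{\mathrm{rew}},c_{\mathrm{ver}}\}$, and for integers $s\ge0$ let $S_s=\{(a,b)\in\mathbb Z_{\ge0}^2:a\le b,\ 2^sc_{\min}\le c_{\mathrm{rew}}2^b+c_{\mathrm{ver}}2^{b-a}<2^{s+1}c_{\min}\}$; for nonempty $S_s$ let $b^\star_s=\max\{b:(a,b)\in S_s\}$, $j^\star_s=\max\{b-a:(a,b)\in S_s\}$, $m_s=\lceil2^{b^\star_s+1}\rceil$ and $k_s=\lceil6\cdot2^{j^\star_s}\rceil$. Fix a threshold $t$ with $q_t>0$ and $s_t>0$, let $(a,b)$ be its dyadic pair, and let $s_\star$ be the shell with $(a,b)\in S_{s_\star}$. Then for every integer $u\ge0$, $(a,b+u)\in S_{s_\star+u}$; consequently \[ m_{s_\star+u}\ge\lceil2^{b+u+1}\rceil,\qquad k_{s_\star+u}\ge\lceil6\cdot2^{b-a+u}\rceil. \]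
   Context: Here $R\sim\mathcal D$ for a distribution $\mathcal D$ on $\mathbb R$ and $V\in\{0,1\}$ with $\Pr(V=1\mid R=r)=h^\star(r)$; $q_t=\Pr(R\ge t)$ and $s_t=\Pr(R\ge t,V=1)$. The dyadic pair of $t$ is the pair of integers $(a,b)$ with $a,b\ge0$, $2^{-a-1}<q_t\le2^{-a}$ and $2^{-b}\le s_t<2^{-b+1}$ (it satisfies $a\le b$). *)

From HB Require Import structures.
From mathcomp Require Import all_boot all_order all_algebra.
From mathcomp Require Import all_classical all_reals all_analysis.
Set Implicit Arguments. Unset Strict Implicit. Unset Printing Implicit Defensive.
Import Order.TTheory GRing.Theory Num.Theory.
Local Open Scope ring_scope.
Local Open Scope classical_set_scope.

Section Defs.
Variable R : realType.

Definition cmin (crew cver : R) : R := Num.min crew cver.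

Definition inS (crew cver : R) (s a b : nat) : bool :=
  [&& (a <= b)%N,
      (2 ^+ s * cmin crew cver <= crew * 2 ^+ b + cver * 2 ^+ (b - a)) &
      (crew * 2 ^+ b + cver * 2 ^+ (b - a) < 2 ^+ s.+1 * cmin crew cver)].

(* S_s is contained in {(a,b) : a <= b <= s} (since c_rew 2^b < 2^(s+1) c_min
   <= 2^(s+1) c_rew), so maxima over S_s are finite maxima over this box. *)
Definition bstar (crew cver : R) (s : nat) : nat :=
  \max_(p : 'I_s.+1 * 'I_s.+1 | inS crew cver s p.1 p.2) (p.2 : nat).

Definition jstar (crew cver : R) (s : nat) : nat :=
  \max_(p : 'I_s.+1 * 'I_s.+1 | inS crew cver s p.1 p.2) (p.2 - p.1)%N.

Definition mS (crew cver : R) (s : nat) : int :=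
  Num.ceil ((2 : R) ^+ (bstar crew cver s).+1).
Definition kS (crew cver : R) (s : nat) : int :=
  Num.ceil (6 * (2 : R) ^+ (jstar crew cver s)).

Definition dyadic_pair (q st : R) (a b : nat) : Prop :=
  (2 ^+ a.+1)^-1 < q /\ q <= (2 ^+ a)^-1 /\
  (2 ^+ b)^-1 <= st /\ st < 2 / 2 ^+ b.
End Defs.

Definition qt d (T : measurableType d) (R : realType) (P : probability T R)
  (X : T -> R) (t : R) : R := fine (P [set w | t <= X w]).
Definition st d (T : measurableType d) (R : realType) (P : probability T R)
  (X : T -> R) (V : T -> bool) (t : R) : R :=
  fine (P [set w | t <= X w /\ V w]).

From HB Require Import structures.
From mathcomp Require Import all_boot all_order all_algebra.
From mathcomp Require Import all_classical all_reals all_analysis.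
Set Implicit Arguments. Unset Strict Implicit. Unset Printing Implicit Defensive.
Import Order.TTheory GRing.Theory Num.Theory.
Local Open Scope ring_scope.
Local Open Scope classical_set_scope.

(* Moving from (a, b) to (a, b + u) multiplies the cost
   c_rew 2^b + c_ver 2^(b-a) by exactly 2^u, so it moves the pair from shell s
   to shell s + u.  Since c_rew 2^b < 2^(s+1) c_min <= 2^(s+1) c_rew, every pair
   of S_s has b <= s; hence (a, b + u) is one of the indices over which b*_(s+u)
   and j*_(s+u) are maximised, and the bounds on m and k follow by monotonicity
   of the ceiling. *)

Section Shells.
Variables (R : realType) (crew cver : R).
Hypotheses (crew_gt0 : 0 < crew) (cver_ge0 : 0 <= cver).

Lemma inS_le s a b : inS crew cver s a b -> (a <= b)%N.
Proof. by case/and3P. Qed.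

Lemma inS_shift s a b u :
  inS crew cver s a b -> inS crew cver (s + u) a (b + u).
Proof.
move=> /and3P[le_ab lo hi].
have pos2u : 0 < (2 : R) ^+ u by rewrite exprn_gt0.
apply/and3P; rewrite -addnBAC //.
split; first by rewrite (leq_trans le_ab) ?leq_addr.
- by rewrite !exprD !mulrA -mulrDl mulrAC ler_pM2r.
- by rewrite -addSn !exprD !mulrA -mulrDl mulrAC ltr_pM2r.
Qed.

Lemma inS_le_shell s a b : inS crew cver s a b -> (b <= s)%N.
Proof.
move=> /and3P[_ _ hi].
have cmin_le : cmin crew cver <= crew by rewrite /cmin ge_min lexx.
have : crew * 2 ^+ b < crew * 2 ^+ s.+1.
  apply: le_lt_trans (lt_le_trans hi _).
    by rewrite lerDl mulr_ge0 ?exprn_ge0.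
  by rewrite mulrC ler_wpM2r ?exprn_ge0.
by rewrite ltr_pM2l // ltr_eXn2l // ltr1n.
Qed.

Let pair_ord s a b (hS : inS crew cver s a b) : 'I_s.+1 * 'I_s.+1 :=
  (Ordinal (leq_trans (inS_le hS) (inS_le_shell hS) : a < s.+1)%N,
   Ordinal (inS_le_shell hS : b < s.+1)%N).

Lemma leq_bstar s a b : inS crew cver s a b -> (b <= bstar crew cver s)%N.
Proof.
move=> hS; exact: (@leq_bigmax_cond _ _ (fun p : 'I_s.+1 * 'I_s.+1 => (p.2 : nat))
  (pair_ord hS) hS).
Qed.

Lemma leq_jstar s a b : inS crew cver s a b -> (b - a <= jstar crew cver s)%N.
Proof.
move=> hS; exact: (@leq_bigmax_cond _ _ (fun p : 'I_s.+1 * 'I_s.+1 => (p.2 - p.1)%N)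
  (pair_ord hS) hS).
Qed.

Lemma ceil_exp2_le_mS s a b :
  inS crew cver s a b -> Num.ceil ((2 : R) ^+ b.+1) <= mS crew cver s.
Proof. by move=> /leq_bstar le_b; rewrite le_ceil // ler_eXn2l ?ltr1n. Qed.

Lemma ceil_exp2_le_kS s a b :
  inS crew cver s a b -> Num.ceil (6 * (2 : R) ^+ (b - a)) <= kS crew cver s.
Proof.
by move=> /leq_jstar le_j; rewrite le_ceil // ler_pM2l ?ler_eXn2l ?ltr1n.
Qed.

End Shells.

Theorem lemma6 (d : measure_display) (T : measurableType d) (R : realType)
  (P : probability T R) (X : T -> R) (V : T -> bool)
  (mX : measurable_fun setT X) (mV : measurable [set w | V w])
  (crew cver : R) (hcrew : 0 < crew) (hcver : 0 < cver)
  (t : R) (hq : 0 < qt P X t) (hs : 0 < st P X V t)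
  (a b : nat) (hab : dyadic_pair (qt P X t) (st P X V t) a b)
  (sstar : nat) (hsstar : inS crew cver sstar a b) :
  forall u : nat,
    inS crew cver (sstar + u) a (b + u) /\
    (Num.ceil ((2 : R) ^+ (b + u).+1) <= mS crew cver (sstar + u))%R /\
    (Num.ceil (6 * (2 : R) ^+ (b - a + u)) <= kS crew cver (sstar + u))%R.
Proof.
(* Only membership of (a, b) in S_sstar is used. *)
move=> u; have hS := inS_shift u hsstar.
have cver_ge0 := ltW hcver.
rewrite (addnBAC u (inS_le hsstar)); split; first exact: hS.
split; [exact: (ceil_exp2_le_mS hcrew cver_ge0 hS)
      | exact: (ceil_exp2_le_kS hcrew cver_ge0 hS)].
Qed.
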